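(* Let $\epsilon>0$ be a constant and let the input graph have $n$ vertices. In any call to ContractLayer, within each outer round there are at most $O(\log n)$ inner rounds, with high probability.
   Context: Setting: an undirected graph $G=(V,E,w)$ with $n$ vertices and positive edge weights. A partition of $V$ into clusters is maintained (initially singletons), together with the cluster graph $H$ whose vertices are the clusters, with an edge between clusters $X\neq Y$ iff $G$ has an edge between them, of average-linkage weight $\mathcal{W}(X,Y)=\sum_{(x,y)\in E,\,x\in X,\,y\in Y} w(x,y)/(|X||Y|)$. The size $|X|$ of a vertex of $H$ is the size of its cluster; merging means replacing two clusters by their union. ContractLayer$(H,T_L,\epsilon)$: while the maximum edge weight of $H$ is at least $T_L$, perform an outer round: color each non-isolated vertex of $H$ red or blue independently with probability $1/2$ each; let $G_c$ consist of the edges of $H$ of weight $\ge T_L$ joining a blue vertex $x$ to a red vertex $y$ with $|y|\ge|x|$. While $G_c$ has edges, perform an inner round: each blue vertex $b$ picks an independent uniform priority $\pi_b\in[0,1]$ and a uniformly random red neighbor $C_b$ in $G_c$ (blue vertices with no red neighbor in $G_c$ do nothing); for each red $r$, order the blue vertices proposing to $r$ by priority and select the shortest prefix whose total cluster size exceeds $\epsilon|r|$ (all of them if no prefix does); merge every selected blue vertex into its red vertex, updating all edge weights of $H$ and $G_c$ exactly; then remove from $G_c$ every edge with two red endpoints or weight below $T_L$, and remove from $G_c$ every red vertex whose cluster size has grown by more than a factor $(1+\epsilon)$ since the start of the outer round. ''With high probability'' means: for every constant $k$, the bound holds (with constant depending on $k$) with probability at least $1-n^{-k}$. *)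

(* A finite (discrete) probability model of one outer round
   of ContractLayer. *)
From HB Require Import structures.
From mathcomp Require Import all_boot all_order all_algebra.
Set Implicit Arguments. Unset Strict Implicit. Unset Printing Implicit Defensive.
Import Order.TTheory GRing.Theory Num.Theory.
Local Open Scope ring_scope.

Section Dist.
Variable R : realFieldType.

Definition dist (T : Type) := seq (R * T).
Definition dret T (x : T) : dist T := [:: (1, x)].
Definition dbind T U (d : dist T) (f : T -> dist U) : dist U :=
  flatten [seq [seq (p.1 * q.1, q.2) | q <- f p.2] | p <- d].
Definition duniform T (s : seq T) : dist T :=
  [seq ((size s)%:R^-1, x) | x <- s].
Definition dprob T (d : dist T) (A : pred T) : R :=
  \sum_(p <- d | A p.2) p.1.

(* independent fair coins: each element of s is kept (colored red) with
   probability 1/2; returns the list of kept elements *)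
Fixpoint coins T (s : seq T) : dist (seq T) :=
  match s with
  | [::] => dret [::]
  | x :: s' => dbind (duniform [:: true; false]) (fun b =>
               dbind (coins s') (fun t => dret (if b then x :: t else t)))
  end.

Fixpoint choices B C (s : seq B) (nb : B -> seq C) : dist (seq (B * C)) :=
  match s with
  | [::] => dret [::]
  | b :: s' => dbind (duniform (nb b)) (fun c =>
               dbind (choices s' nb) (fun t => dret ((b, c) :: t)))
  end.
End Dist.

Section ContractLayer.
Variable R : realFieldType.
Variable n : nat.
Variable e : rel 'I_n.
Variable w : 'I_n -> 'I_n -> R.

Notation cluster := {set 'I_n}.

Definition Wt (X Y : cluster) : R :=
  (\sum_(x in X) \sum_(y in Y | e x y) w x y) / (#|X| * #|Y|)%:R.

Definition Hedge (X Y : cluster) : bool := [exists x in X, exists y in Y, e x y].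

Definition nonisolated (P : {set cluster}) (X : cluster) : bool :=
  [exists Y in P, (Y != X) && Hedge X Y].

Variable eps : R.
Variable TL : R.

Definition csize (s : seq cluster) : nat := \sum_(b <- s) #|b|.

(* the shortest prefix of s (s ordered by priority) whose total size exceeds
   eps * |r|, or all of s if no prefix does *)
Definition select_prefix (r : cluster) (s : seq cluster) : seq cluster :=
  let j := find (fun i => eps * (#|r|)%:R < (csize (take i.+1 s))%:R)
                (iota 0 (size s)) in
  take j.+1 s.

(* size at the start of the outer round of the current red cluster X:
   X contains exactly one red cluster of the start of the outer round *)
Definition start_size (red0 : {set cluster}) (X : cluster) : nat :=
  \sum_(Y in red0 | Y \subset X) #|Y|.

(* state inside an outer round: the current partition P (vertices of H) and
   the edge set Ec of G_c, stored as pairs (blue endpoint, red endpoint) *)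
Definition state := ({set cluster} * {set cluster * cluster})%type.

Definition inner_step (red0 : {set cluster}) (st : state) : dist R state :=
  let P := st.1 in
  let Ec := st.2 in
  let props := enum [set b : cluster | [exists r : cluster, (b, r) \in Ec]] in
  let nbrs (b : cluster) := enum [set r : cluster | (b, r) \in Ec] in
  dbind (choices R props nbrs) (fun ch =>
  dbind (duniform R (permutations props)) (fun pi => (* priority order (pi_b) *)
  let sel (r : cluster) := select_prefix r [seq b <- pi | (b, r) \in ch] in
  let merged (b : cluster) := [exists r : cluster, b \in sel r] in
  let newcl (r : cluster) := r :|: \bigcup_(b <- sel r) b in
  let P' := [set newcl X | X in P & ~~ merged X] in
  let Ec1 := [set (p.1, newcl p.2) | p in Ec & ~~ merged p.1] in
  let Ec' := [set q in Ec1 | (TL <= Wt q.1 q.2)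
                & ((#|q.2|)%:R <= (1 + eps) * (start_size red0 q.2)%:R)] in
  dret R (P', Ec'))).

(* the inner loop: "while G_c has edges, perform an inner round";
   returns Some (number of inner rounds performed), or None if the fuel is
   exhausted (which cannot happen for fuel > #|P|; None counts as failure). *)
Fixpoint inner_loop (red0 : {set cluster}) (fuel : nat) (st : state)
  : dist R (option nat) :=
  if st.2 == set0 then dret R (Some 0%N) else
  match fuel with
  | 0 => dret R None
  | fuel'.+1 => dbind (inner_step red0 st) (fun st' =>
                dbind (inner_loop red0 fuel' st') (fun o =>
                dret R (omap S o)))
  end.

Definition outer_round (P0 : {set cluster}) : dist R (option nat) :=
  dbind (coins R (enum [set X in P0 | nonisolated P0 X])) (fun t =>
  let red0 := [set X : cluster | X \in t] in
  let blue0 := [set X in P0 | nonisolated P0 X & X \notin t] in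
  let Ec0 := [set p : cluster * cluster | [&& p.1 \in blue0, p.2 \in red0,
                 Hedge p.1 p.2, TL <= Wt p.1 p.2 & (#|p.1| <= #|p.2|)%N]] in
  inner_loop red0 n.+1 (P0, Ec0)).

End ContractLayer.

From HB Require Import structures.
From mathcomp Require Import all_boot all_order all_algebra.
From mathcomp Require Import ring lra.
Set Implicit Arguments. Unset Strict Implicit. Unset Printing Implicit Defensive.
Import Order.TTheory GRing.Theory Num.Theory.
Local Open Scope ring_scope.

(* An edge (b, r) of G_c survives an inner round only if
   b is not merged and r stays within its (1 + eps) growth budget.  If the red
   cluster C_b chosen by b receives load at most eps |C_b| from the other
   proposers, then b lies in the prefix selected by C_b and is merged; if r
   receives load more than eps |r| from proposers other than b, then the
   prefix selected by r already exceeds eps |r| and r leaves G_c.  As C_b is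
   uniform over the red neighbours of b and independent of the other
   proposals, the probabilities of these two events, summed over the red
   neighbours r of b, add up to the degree of b.  Each of them destroys the
   edge, so every inner round halves the expected number of edges of G_c, and
   Markov's inequality bounds the probability that more than (k + 2) log n
   rounds are needed by n^2 / 2^((k + 2) log n) <= n^-k.  When n <= (k + 2) log n
   the bound is deterministic: every inner round merges a blue endpoint of G_c. *)

Section FiniteDistributions.
Variable R : realFieldType.

Definition expect T (d : dist R T) (f : T -> R) : R := \sum_(p <- d) p.1 * f p.2.

Definition dmass T (d : dist R T) : R := expect d (fun _ => 1).

Definition dweights_ge0 T (d : dist R T) : bool := all (fun p => 0 <= p.1) d.

Fixpoint dall T (P : T -> Prop) (d : dist R T) : Prop :=
  if d is p :: d' then P p.2 /\ dall P d' else True.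

Lemma dprobE T (d : dist R T) (A : pred T) : dprob d A = expect d (fun x => (A x)%:R).
Proof.
rewrite /dprob /expect big_mkcond; apply: eq_bigr => p _.
by case: (A p.2); rewrite ?mulr1 ?mulr0.
Qed.

Lemma expect_cat T (d1 d2 : dist R T) f :
  expect (d1 ++ d2) f = expect d1 f + expect d2 f.
Proof. exact: big_cat. Qed.

Lemma expect_ret T (x : T) f : expect (dret R x) f = f x.
Proof. by rewrite /expect big_seq1 mul1r. Qed.

Lemma expect_bind T U (d : dist R T) (g : T -> dist R U) f :
  expect (dbind d g) f = expect d (fun x => expect (g x) f).
Proof.
elim: d => [|p d IH]; first by rewrite /expect !big_nil.
rewrite /dbind /= expect_cat -/(dbind d g) IH /expect big_cons; congr (_ + _).
by rewrite big_map big_distrr /=; apply: eq_bigr => q _; rewrite mulrA.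
Qed.

Lemma expect_bind_ret T U (d : dist R T) (h : T -> U) f :
  expect (dbind d (fun x => dret R (h x))) f = expect d (fun x => f (h x)).
Proof. by rewrite expect_bind; apply: eq_bigr => p _; rewrite expect_ret. Qed.

Lemma expect_uniform T (s : seq T) f :
  expect (duniform R s) f = (size s)%:R^-1 * \sum_(x <- s) f x.
Proof. by rewrite /expect big_map big_distrr. Qed.

Lemma eq_expect T (d : dist R T) f g : dall (fun x => f x = g x) d ->
  expect d f = expect d g.
Proof.
elim: d => [|p d IH] /=; first by rewrite /expect !big_nil.
by case=> fg dfg; rewrite /expect !big_cons fg -!/(expect _ _) IH.
Qed.

Lemma ler_expect T (d : dist R T) f g : dweights_ge0 d ->
  dall (fun x => f x <= g x) d -> expect d f <= expect d g.
Proof.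
elim: d => [|p d IH] /=; first by rewrite /expect !big_nil.
case/andP=> p_ge0 d_ge0 [fg dfg]; rewrite /expect !big_cons -!/(expect _ _).
by rewrite lerD ?ler_wpM2l ?IH.
Qed.

Lemma expectD T (d : dist R T) f g :
  expect d (fun x => f x + g x) = expect d f + expect d g.
Proof. by rewrite /expect -big_split; apply: eq_bigr => p _; rewrite mulrDr. Qed.

Lemma expectZ T (d : dist R T) c f : expect d (fun x => c * f x) = c * expect d f.
Proof. by rewrite /expect big_distrr; apply: eq_bigr => p _; rewrite mulrCA. Qed.

Lemma expect_const T (d : dist R T) c : expect d (fun _ => c) = c * dmass d.
Proof. by rewrite -expectZ; apply: eq_bigr => p _; rewrite mulr1. Qed.

Lemma expect_affine T (d : dist R T) a c f : dmass d = 1 ->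
  expect d (fun x => a + c * f x) = a + c * expect d f.
Proof. by move=> d1; rewrite expectD expect_const d1 mulr1 expectZ. Qed.

Lemma expect_le_const T (d : dist R T) f c : dweights_ge0 d -> dmass d = 1 ->
  dall (fun x => f x <= c) d -> expect d f <= c.
Proof.
move=> d_ge0 d1 fc; have -> : c = expect d (fun _ => c) by rewrite expect_const d1 mulr1.
exact: ler_expect.
Qed.

Lemma const_le_expect T (d : dist R T) f c : dweights_ge0 d -> dmass d = 1 ->
  dall (fun x => c <= f x) d -> c <= expect d f.
Proof.
move=> d_ge0 d1 cf; have -> : c = expect d (fun _ => c) by rewrite expect_const d1 mulr1.
exact: ler_expect.
Qed.

Lemma expect_sum T I (s : seq I) (P : pred I) (d : dist R T) (F : I -> T -> R) :
  expect d (fun x => \sum_(i <- s | P i) F i x) = \sum_(i <- s | P i) expect d (F i).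
Proof.
rewrite /expect (eq_bigr _ (fun p _ => big_distrr _ _ _)) /=.
exact: exchange_big.
Qed.

Lemma dall_impl T (P Q : T -> Prop) d : (forall x, P x -> Q x) -> dall P d -> dall Q d.
Proof. by move=> PQ; elim: d => [|p d IH] //= [/PQ Pp /IH]; split. Qed.

Lemma dallW T (P : T -> Prop) d : (forall x, P x) -> dall P d.
Proof. by move=> allP; elim: d => [|p d IH] /=. Qed.

Lemma dall_cat T (P : T -> Prop) d1 d2 : dall P d1 -> dall P d2 -> dall P (d1 ++ d2).
Proof. by elim: d1 => [|p d IH] //= [? ?] ?; split; auto. Qed.

Lemma dall_bind T U (P : U -> Prop) (d : dist R T) (g : T -> dist R U) :
  dall (fun x => dall P (g x)) d -> dall P (dbind d g).
Proof.
elim: d => [|p d IH] //= [Pg /IH]; apply: dall_cat.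
by elim: (g p.2) Pg => [|q s IHs] //= [? /IHs].
Qed.

Lemma dall_uniform (T : eqType) (P : T -> Prop) (s : seq T) :
  {in s, forall x, P x} -> dall P (duniform R s).
Proof.
rewrite /duniform; move: (size s)%:R^-1 => c.
elim: s => [|x s IH] //= Ps; split; first by apply: Ps; rewrite mem_head.
by apply: IH => y sy; apply: Ps; rewrite in_cons sy orbT.
Qed.

Lemma dweights_ge0_bind T U (d : dist R T) (g : T -> dist R U) :
  dweights_ge0 d -> (forall x, dweights_ge0 (g x)) -> dweights_ge0 (dbind d g).
Proof.
move=> + g_ge0; elim: d => //= p d IH /andP [p_ge0 /IH].
rewrite /dweights_ge0 all_cat -/(dbind d g) => ->; rewrite andbT all_map.
by apply: sub_all (g_ge0 p.2) => q /= q_ge0; apply: mulr_ge0.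
Qed.

Lemma dweights_ge0_ret T (x : T) : dweights_ge0 (dret R x).
Proof. by rewrite /= ler01. Qed.

Lemma dweights_ge0_uniform T (s : seq T) : dweights_ge0 (duniform R s).
Proof.
rewrite /dweights_ge0 all_map (@eq_all _ _ predT) ?all_predT // => x /=.
by rewrite invr_ge0 ler0n.
Qed.

Lemma dmass_bind T U (d : dist R T) (g : T -> dist R U) :
  dmass d = 1 -> dall (fun x => dmass (g x) = 1) d -> dmass (dbind d g) = 1.
Proof. by rewrite /dmass expect_bind => d1 g1; rewrite (eq_expect g1). Qed.

Lemma dmass_ret T (x : T) : dmass (dret R x) = 1.
Proof. exact: expect_ret. Qed.

Lemma dmass_uniform T (s : seq T) : (0 < size s)%N -> dmass (duniform R s) = 1.
Proof.
move=> s_gt0; rewrite /dmass expect_uniform big_const_seq count_predT iter_addr_0.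
by rewrite -mulr_natr mul1r mulVf // pnatr_eq0 -lt0n.
Qed.

Lemma dmass_uniform_permutations (T : eqType) (s : seq T) :
  dmass (duniform R (permutations s)) = 1.
Proof.
apply: dmass_uniform; have : s \in permutations s by rewrite mem_permutations.
by case: permutations.
Qed.

Lemma coins_ge0 T (s : seq T) : dweights_ge0 (coins R s).
Proof.
elim: s => [|x s IH]; rewrite [coins _ _]/=; first exact: dweights_ge0_ret.
apply: dweights_ge0_bind (dweights_ge0_uniform _) _ => b.
by apply: dweights_ge0_bind IH _ => t; apply: dweights_ge0_ret.
Qed.

Lemma coins_mass T (s : seq T) : dmass (coins R s) = 1.
Proof.
elim: s => [|x s IH]; rewrite [coins _ _]/=; first exact: dmass_ret.
apply: dmass_bind (dmass_uniform _) _ => //; apply: dallW => b.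
by apply: dmass_bind IH _; apply: dallW => t; apply: dmass_ret.
Qed.

Lemma coins_sub (T : eqType) (s : seq T) :
  dall (fun t => {subset t <= s}) (coins R s).
Proof.
elim: s => [|x s IH]; rewrite [coins _ _]/=; first by [].
apply: dall_bind; apply: dallW => b; apply: dall_bind.
apply: dall_impl IH => t ts /=; split => // y; rewrite in_cons.
by case: b => [|/ts ->]; rewrite ?orbT // in_cons => /orP [->|/ts ->]; rewrite ?orbT.
Qed.

Lemma choices_ge0 B C (s : seq B) (nb : B -> seq C) : dweights_ge0 (choices R s nb).
Proof.
elim: s => [|x s IH]; rewrite [choices _ _ _]/=; first exact: dweights_ge0_ret.
apply: dweights_ge0_bind (dweights_ge0_uniform _) _ => c.
by apply: dweights_ge0_bind IH _ => t; apply: dweights_ge0_ret.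
Qed.

Lemma choices_mass (B : eqType) C (s : seq B) (nb : B -> seq C) :
  {in s, forall b, 0 < size (nb b)}%N -> dmass (choices R s nb) = 1.
Proof.
elim: s => [|x s IH] nb_gt0; rewrite [choices _ _ _]/=; first exact: dmass_ret.
have {}IH : dmass (choices R s nb) = 1.
  by apply: IH => b sb; apply: nb_gt0; rewrite in_cons sb orbT.
apply: dmass_bind; first by apply: dmass_uniform; apply: nb_gt0; rewrite mem_head.
by apply: dallW => c; apply: dmass_bind IH _; apply: dallW => t; apply: dmass_ret.
Qed.

Lemma choices_supp (B C : eqType) (s : seq B) (nb : B -> seq C) :
  dall (fun ch => map fst ch = s /\ {in ch, forall p, p.2 \in nb p.1}) (choices R s nb).
Proof.
elim: s => [|x s IH]; rewrite [choices _ _ _]/=; first by [].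
apply: dall_bind; apply: dall_uniform => c xc; apply: dall_bind.
apply: dall_impl IH => t [ts tnb] /=; split => //; split; first by rewrite ts.
by move=> p; rewrite in_cons => /orP [/eqP -> //|/tnb].
Qed.

Lemma choices_indep (B C : eqType) (s : seq B) (nb : B -> seq C) b r
    (g : seq (B * C) -> R) :
  uniq s -> b \in s -> r \in nb b -> uniq (nb b) ->
  expect (choices R s nb)
    (fun ch => ((b, r) \in ch)%:R * g [seq p <- ch | p.1 != b]) =
  (size (nb b))%:R^-1 * expect (choices R s nb) (fun ch => g [seq p <- ch | p.1 != b]).
Proof.
elim: s g => [|x s IH] g; first by rewrite in_nil.
rewrite [choices _ _ _]/= cons_uniq => /andP [xs s_uniq] bs r_nb nb_uniq.
rewrite !expect_bind !expect_uniform mulrCA; congr (_ * _).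
case: (eqVneq x b) => [xb|xb]; last first.
  have {}bs : b \in s by move: bs; rewrite in_cons eq_sym (negbTE xb).
  rewrite big_distrr; apply: eq_bigr => c _ /=; rewrite !expect_bind_ret /= xb.
  rewrite -(IH (fun u => g ((x, c) :: u))) //; apply: eq_expect; apply: dallW => t.
  by rewrite in_cons xpair_eqE eq_sym (negbTE xb).
clear IH bs; subst b.
set E := expect (choices R s nb) (fun t => g [seq p <- t | p.1 != x]).
have x_fresh : dall (fun t => (x, r) \notin t) (choices R s nb).
  apply: dall_impl (choices_supp s nb) => t [ts _]; apply: contra xs => xrt.
  by rewrite -ts; apply/mapP; exists (x, r).
have proposal_of_x c : expect (dbind (choices R s nb) (fun t => dret R ((x, c) :: t)))
    (fun ch => ((x, r) \in ch)%:R * g [seq p <- ch | p.1 != x]) = (c == r)%:R * E.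
  rewrite expect_bind_ret -expectZ; apply: eq_expect.
  apply: dall_impl x_fresh => t /negbTE xrt /=.
  by rewrite eqxx in_cons xrt orbF xpair_eqE eqxx eq_sym.
have E_const c : expect (dbind (choices R s nb) (fun t => dret R ((x, c) :: t)))
    (fun ch => g [seq p <- ch | p.1 != x]) = E.
  by rewrite expect_bind_ret /= eqxx.
rewrite (eq_bigr _ (fun c _ => proposal_of_x c)) (eq_bigr _ (fun c _ => E_const c)).
rewrite -big_distrl /= (big_rem r) //= eqxx big1_seq ?addr0 => [|c /andP [_ cr]].
  rewrite mulr1n mul1r big_const_seq count_predT iter_addr_0 -[E *+ _]mulr_natr mulrCA.
  by rewrite mulVf ?mulr1 // pnatr_eq0 -lt0n; case: (nb x) r_nb.
by case: eqP cr => [->|_]; rewrite ?mem_rem_uniqF.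
Qed.

End FiniteDistributions.

Lemma map_fst_uniq_eq (A B : eqType) (s : seq (A * B)) a b1 b2 :
  uniq (map fst s) -> (a, b1) \in s -> (a, b2) \in s -> b1 = b2.
Proof.
elim: s => [|p s IH] //= /andP [p_s s_uniq]; rewrite !in_cons.
have fst_in b : (a, b) \in s -> a \in map fst s by move=> ab; apply/mapP; exists (a, b).
case/predU1P => [ab1_p|ab1]; case/predU1P => [ab2_p|ab2].
- by move: ab2_p; rewrite -ab1_p => -[].
- by rewrite -ab1_p /= (fst_in _ ab2) in p_s.
- by rewrite -ab2_p /= (fst_in _ ab1) in p_s.
- exact: IH.
Qed.

Lemma disjoint_setUr (T : finType) (A B C : {set T}) :
  [disjoint A & B] -> [disjoint A & C] -> [disjoint A & B :|: C].
Proof. by rewrite -!setI_eq0 setIUr => /eqP -> /eqP ->; rewrite setU0. Qed.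

Lemma card_setU_bigcup (T : finType) (r : {set T}) (l : seq {set T}) :
  uniq l -> {in l &, forall x y : {set T}, x != y -> [disjoint x & y]} ->
  {in l, forall x : {set T}, [disjoint x & r]} ->
  #|r :|: \bigcup_(x <- l) x| = (#|r| + \sum_(x <- l) #|x|)%N.
Proof.
elim: l r => [|x l IH] r; first by rewrite !big_nil setU0 addn0.
rewrite cons_uniq => /andP [xl l_uniq] l_disj l_r.
have x_r : [disjoint x & r] by apply: l_r; rewrite mem_head.
rewrite big_cons setUA IH // => [|y z yl zl|y yl].
- by rewrite cardsU disjoint_setI0 1?disjoint_sym // cards0 subn0 big_cons addnA.
- by apply: l_disj; rewrite in_cons ?yl ?zl orbT.
apply: disjoint_setUr; first by apply: l_r; rewrite in_cons yl orbT.
by apply: l_disj; rewrite ?mem_head ?in_cons ?yl ?orbT //; apply: contraNneq xl => <-.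
Qed.

Lemma csize_le_sum n (l : seq {set 'I_n}) (P : pred {set 'I_n}) :
  uniq l -> {in l, forall x, P x} -> (csize l <= \sum_(x | P x) #|x|)%N.
Proof.
move=> l_uniq lP; rewrite /csize big_uniq // [leqLHS]big_mkcond [leqRHS]big_mkcond /=.
by apply: leq_sum => x _; case: ifP => // /lP ->.
Qed.

Lemma sum_le_csize n (l : seq {set 'I_n}) (P : pred {set 'I_n}) :
  uniq l -> (forall x, P x -> x \in l) -> (\sum_(x | P x) #|x| <= csize l)%N.
Proof.
move=> l_uniq Pl; rewrite /csize big_uniq // [leqLHS]big_mkcond [leqRHS]big_mkcond /=.
by apply: leq_sum => x _; case: ifP => // /Pl ->.
Qed.

Section SelectPrefix.
Variables (R : realFieldType) (eps : R) (n : nat) (r : {set 'I_n}).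
Local Notation exceeds s := (eps * (#|r|)%:R < (csize s)%:R).

Lemma mem_select_prefix (s : seq {set 'I_n}) b : uniq s -> b \in s ->
  (forall i, i < index b s -> ~~ exceeds (take i.+1 s))%N ->
  b \in select_prefix eps r s.
Proof.
move=> s_uniq bs before_b; rewrite /select_prefix in_take // ltnS.
set a := (fun i => _); set j := find a _.
case: (leqP (index b s) j) => // lt_j_b; exfalso.
have j_lt : (j < size s)%N by apply: ltn_trans lt_j_b _; rewrite index_mem.
have has_a : has a (iota 0 (size s)) by rewrite has_find size_iota.
by have := nth_find 0%N has_a; rewrite -/j nth_iota // add0n; apply/negP/before_b.
Qed.

Lemma select_prefix_head b (s : seq {set 'I_n}) : b \in select_prefix eps r (b :: s).
Proof. by rewrite /select_prefix; move: (find _ _) => j; rewrite /= mem_head. Qed.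

Hypothesis eps_ge0 : 0 <= eps.

Lemma select_prefix_exceeds (s : seq {set 'I_n}) :
  exceeds s -> exceeds (select_prefix eps r s).
Proof.
move=> exceeds_s; have s_gt0 : (0 < size s)%N.
  case: s exceeds_s => //; rewrite /csize big_nil ltNge.
  by rewrite mulr_ge0 ?ler0n.
rewrite /select_prefix; set a := (fun i => _).
have has_a : has a (iota 0 (size s)).
  apply/hasP; exists (size s).-1; first by rewrite mem_iota add0n leq0n /= prednK.
  by rewrite /a prednK // take_size.
have := nth_find 0%N has_a; rewrite nth_iota ?add0n //.
by move: has_a; rewrite has_find size_iota.
Qed.

End SelectPrefix.

Section InnerRound.
Variables (R : realFieldType) (n : nat) (e : rel 'I_n) (w : 'I_n -> 'I_n -> R).
Variables (eps TL : R).
Hypothesis eps_gt0 : 0 < eps.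
Local Notation cluster := {set 'I_n}.
Local Notation edges := {set cluster * cluster}.
Local Notation proposals := (seq (cluster * cluster)).
Variables red0 blue0 : {set cluster}.
Hypothesis red_blue_trivI : trivIset (red0 :|: blue0).
Hypothesis red_blue_disjoint : [disjoint red0 & blue0].

(* In an inner round, [ch] lists the proposals (b, C_b) and [pi] orders the
   proposers by priority. *)
Definition proposers (Ec : edges) := enum [set b | [exists r, (b, r) \in Ec]].
Definition red_nbrs (Ec : edges) b := enum [set r | (b, r) \in Ec].
Definition selected (ch : proposals) (pi : seq cluster) (r : cluster) :=
  select_prefix eps r [seq b <- pi | (b, r) \in ch].
Definition merged (ch : proposals) (pi : seq cluster) (b : cluster) :=
  [exists r, b \in selected ch pi r].
Definition grown (ch : proposals) (pi : seq cluster) (r : cluster) :=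
  r :|: \bigcup_(b <- selected ch pi r) b.
Definition growth_ok (X : cluster) :=
  (#|X|)%:R <= (1 + eps) * (start_size red0 X)%:R.
Definition next_edges (Ec : edges) (ch : proposals) (pi : seq cluster) :=
  [set q in [set (p.1, grown ch pi p.2) | p in Ec & ~~ merged ch pi p.1]
     | (TL <= Wt e w q.1 q.2) & growth_ok q.2].
Definition next_part (P : {set cluster}) (ch : proposals) (pi : seq cluster) :=
  [set grown ch pi X | X in P & ~~ merged ch pi X].

Lemma inner_stepE P Ec : inner_step e w eps TL red0 (P, Ec) =
  dbind (choices R (proposers Ec) (red_nbrs Ec)) (fun ch =>
  dbind (duniform R (permutations (proposers Ec))) (fun pi =>
  dret R (next_part P ch pi, next_edges Ec ch pi))).
Proof. by []. Qed.

Lemma mem_proposers Ec b : (b \in proposers Ec) = [exists r, (b, r) \in Ec].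
Proof. by rewrite mem_enum inE. Qed.

Lemma mem_red_nbrs Ec b r : (r \in red_nbrs Ec b) = ((b, r) \in Ec).
Proof. by rewrite mem_enum inE. Qed.

Lemma red_nbrs_gt0 Ec b : b \in proposers Ec -> (0 < size (red_nbrs Ec b))%N.
Proof.
rewrite mem_proposers => /existsP [r br].
by rewrite -cardE card_gt0; apply/set0Pn; exists r; rewrite inE.
Qed.

Lemma blue_disjoint x y : x \in blue0 -> y \in blue0 -> x != y -> [disjoint x & y].
Proof.
by move=> xb yb; move/trivIsetP: red_blue_trivI; apply; rewrite inE ?xb ?yb orbT.
Qed.

Lemma red_blue_disjoint_mem Y x : Y \in red0 -> x \in blue0 -> [disjoint Y & x].
Proof.
move=> Yr xb; move/trivIsetP: red_blue_trivI; apply; rewrite ?inE ?Yr ?xb ?orbT //.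
apply: contraTneq red_blue_disjoint => Yx.
by apply/pred0Pn; exists Y; rewrite /= Yr Yx xb.
Qed.

Lemma start_size_le X : (start_size red0 X <= #|X|)%N.
Proof.
set Q := [set Y in red0 | Y \subset X].
have /eqP Q_trivI : trivIset Q.
  by apply: trivIsetS red_blue_trivI; apply/subsetP => Y; rewrite !inE => /andP [->].
have -> : start_size red0 X = \sum_(Y in Q) #|Y| by apply: eq_bigl => Y; rewrite inE.
rewrite Q_trivI; apply/subset_leq_card/bigcupsP => Y.
by rewrite inE => /andP [].
Qed.

Definition gc_inv (Ec : edges) :=
  {in Ec, forall p : cluster * cluster, p.1 \in blue0} /\
  {in Ec &, forall p q : cluster * cluster, [disjoint p.1 & q.2]}.

Definition valid_choice (Ec : edges) (ch : proposals) :=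
  map fst ch = proposers Ec /\
  {in ch, forall p : cluster * cluster, p.2 \in red_nbrs Ec p.1}.

Definition load (r : cluster) (u : proposals) : nat :=
  \sum_(x | (x, r) \in u) #|x|.

Definition light (r : cluster) (u : proposals) : bool :=
  (load r u)%:R <= eps * (#|r|)%:R.

Definition light_without (b r : cluster) (ch : proposals) : bool :=
  light r [seq p <- ch | p.1 != b].

Definition choice_light (Ec : edges) b (ch : proposals) : R :=
  \sum_(r <- red_nbrs Ec b) ((b, r) \in ch)%:R * (light_without b r ch)%:R.

Definition gc_blues (Ec : edges) := [set p.1 | p in Ec].

Lemma mem_selected ch pi r x :
  x \in selected ch pi r -> x \in pi /\ (x, r) \in ch.
Proof. by move/mem_take; rewrite mem_filter => /andP [-> ->]. Qed.

Section OneRound.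
Variables (Ec : edges) (ch : proposals) (pi : seq cluster).
Hypothesis Ec_inv : gc_inv Ec.
Hypothesis ch_valid : valid_choice Ec ch.
Hypothesis pi_perm : perm_eq pi (proposers Ec).

Lemma choice_edge p : p \in ch -> p \in Ec.
Proof. by case: ch_valid => _ /[apply]; rewrite mem_red_nbrs -surjective_pairing. Qed.

Lemma choice_in_pi x r : (x, r) \in ch -> x \in pi.
Proof.
by move=> xr; rewrite (perm_mem pi_perm) -ch_valid.1; apply/mapP; exists (x, r).
Qed.

Lemma pi_uniq : uniq pi.
Proof. by rewrite (perm_uniq pi_perm) enum_uniq. Qed.

Lemma proposal_exists b r : (b, r) \in Ec -> exists c, (b, c) \in ch.
Proof.
move=> br; have : b \in map fst ch.
  by rewrite ch_valid.1 mem_proposers; apply/existsP; exists r.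
by case/mapP => -[x c] xc /= ->; exists c.
Qed.

Lemma selected_blue r x : x \in selected ch pi r -> x \in blue0.
Proof. by case/mem_selected => _ /choice_edge /Ec_inv.1. Qed.

Lemma card_grown r : #|grown ch pi r| = (#|r| + csize (selected ch pi r))%N.
Proof.
rewrite /grown card_setU_bigcup //.
- by rewrite take_uniq // filter_uniq // pi_uniq.
- by move=> x y /selected_blue xb /selected_blue yb; apply: blue_disjoint.
by move=> x /mem_selected [_ /choice_edge x_r]; exact: (Ec_inv.2 _ _ x_r x_r).
Qed.

Lemma start_size_grown r : start_size red0 (grown ch pi r) = start_size red0 r.
Proof.
apply: eq_bigl => Y; case: (boolP (Y \in red0)) => //= Yred.
apply/idP/idP => [/subsetP Ysub|Yr]; last exact: subset_trans Yr (subsetUl _ _).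
apply/subsetP => z zY; move: (Ysub z zY); rewrite in_setU bigcup_seq.
case/orP => // /bigcupP [x /selected_blue xb zx].
by have /pred0P/(_ z) := red_blue_disjoint_mem Yred xb; rewrite /= zY zx.
Qed.

Lemma merged_of_light b r : (b, r) \in ch -> light_without b r ch -> merged ch pi b.
Proof.
move=> br light; apply/existsP; exists r.
set s := [seq x <- pi | (x, r) \in ch].
have s_uniq : uniq s by rewrite filter_uniq // pi_uniq.
have bs : b \in s by rewrite mem_filter br (choice_in_pi br).
apply: mem_select_prefix => // i lt_i_b; rewrite -leNgt; apply: le_trans light.
rewrite ler_nat csize_le_sum ?take_uniq // => x x_pre.
have := mem_take x_pre; rewrite mem_filter => /andP [xr _].
rewrite mem_filter /= xr andbT; apply: contraTneq x_pre => ->.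
by rewrite in_take // ltnS -ltnNge.
Qed.

Lemma heavy_not_growth_ok b r : ~~ light_without b r ch -> ~~ growth_ok (grown ch pi r).
Proof.
rewrite -ltNge => heavy; set s := [seq x <- pi | (x, r) \in ch].
have exceeds_s : eps * (#|r|)%:R < (csize s)%:R.
  apply: lt_le_trans heavy _; rewrite ler_nat sum_le_csize ?filter_uniq ?pi_uniq //.
  move=> x; rewrite mem_filter => /andP [_ xr].
  by rewrite mem_filter xr (choice_in_pi xr).
have := select_prefix_exceeds (ltW eps_gt0) exceeds_s.
rewrite /growth_ok -ltNge card_grown start_size_grown natrD => exceeds_sel.
apply: (@le_lt_trans _ _ ((1 + eps) * (#|r|)%:R)).
  by rewrite ler_pM2l ?addr_gt0 // ler_nat start_size_le.
by rewrite mulrDl mul1r ltrD2l.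
Qed.

Lemma edge_survival b r : (b, r) \in Ec ->
  ((~~ merged ch pi b) && growth_ok (grown ch pi r))%:R
    <= 1 - (choice_light Ec b ch + (~~ light_without b r ch)%:R) / 2.
Proof.
move=> br; have [c bc] := proposal_exists br.
have choice_lightE : choice_light Ec b ch = (light_without b c ch)%:R.
  have fst_uniq : uniq (map fst ch) by rewrite ch_valid.1 enum_uniq.
  rewrite /choice_light (bigD1_seq c) ?enum_uniq ?(ch_valid.2 _ bc) //= bc mul1r.
  rewrite big1_seq ?addr0 // => r' /andP [r'c _].
  case: (boolP ((b, r') \in ch)) => [br'|_]; last by rewrite mul0r.
  by rewrite (map_fst_uniq_eq fst_uniq br' bc) eqxx in r'c.
rewrite choice_lightE; case: (boolP (light_without b c ch)) => [light_c|_].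
  by rewrite (merged_of_light bc light_c); case: light_without => /=; lra.
case: (boolP (light_without b r ch)) => [_|heavy_r] /=.
  by case: (_ && _) => /=; lra.
by rewrite (negbTE (heavy_not_growth_ok heavy_r)) andbF /=; lra.
Qed.

Lemma mem_next_edges q : q \in next_edges Ec ch pi ->
  exists2 p, p \in Ec & ~~ merged ch pi p.1 /\ q = (p.1, grown ch pi p.2).
Proof.
by rewrite inE => /andP [/imsetP [p] + -> _]; rewrite inE => /andP [pEc ?]; exists p.
Qed.

Lemma card_next_edges_le : (#|next_edges Ec ch pi|)%:R <=
  \sum_(p in Ec) ((~~ merged ch pi p.1) && growth_ok (grown ch pi p.2))%:R :> R.
Proof.
set S := [set p in Ec | ~~ merged ch pi p.1 & growth_ok (grown ch pi p.2)].
have : (#|next_edges Ec ch pi| <= #|S|)%N.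
  apply: leq_trans (leq_imset_card (fun p => (p.1, grown ch pi p.2)) S).
  apply/subset_leq_card/subsetP => q.
  rewrite inE => /andP [/imsetP [p] + -> /andP [_ ok]]; rewrite !inE => /andP [pEc not_merged].
  by apply/imsetP; exists p; rewrite ?inE ?pEc ?not_merged.
rewrite -(ler_nat R) => /le_trans; apply; rewrite -sum1_card natr_sum.
rewrite [leLHS]big_mkcond [leRHS]big_mkcond /=; apply: ler_sum => p _.
by rewrite !inE; case: (p \in Ec) => //=; case: (_ && _).
Qed.

Lemma next_edges_inv : gc_inv (next_edges Ec ch pi).
Proof.
split=> [q /mem_next_edges [p pEc [_ ->]]|q q']; first exact: (Ec_inv.1 _ pEc).
move=> /mem_next_edges [p pEc [not_merged ->]] /mem_next_edges [p' p'Ec [_ ->]] /=.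
apply: disjoint_setUr; first exact: Ec_inv.2.
rewrite bigcup_seq; apply: bigcup_disjoint => x x_sel.
apply: blue_disjoint; [exact: Ec_inv.1 | exact: selected_blue x_sel |].
by apply: contraNneq not_merged => ->; apply/existsP; exists p'.2.
Qed.

Lemma card_gc_blues_next : Ec != set0 ->
  (#|gc_blues (next_edges Ec ch pi)| < #|gc_blues Ec|)%N.
Proof.
case/set0Pn => -[b r] br; have [c bc] := proposal_exists br.
have : b \in [seq x <- pi | (x, c) \in ch] by rewrite mem_filter bc (choice_in_pi bc).
case s_def: [seq x <- pi | (x, c) \in ch] => [|x s] // _.
have x_sel : x \in selected ch pi c by rewrite /selected s_def select_prefix_head.
have x_merged : merged ch pi x by apply/existsP; exists c.
have x_blue : x \in gc_blues Ec.
  by have [_ /choice_edge xc] := mem_selected x_sel; apply/imsetP; exists (x, c).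
rewrite (cardsD1 x (gc_blues Ec)) x_blue add1n ltnS; apply/subset_leq_card/subsetP => y.
case/imsetP => q /mem_next_edges [p pEc [p_not_merged ->]] -> /=.
rewrite !inE; apply/andP; split; last by apply/imsetP; exists p.
by apply: contraNneq p_not_merged => ->.
Qed.

End OneRound.

Section ExpectedHalving.
Variable Ec : edges.
Local Notation C := (choices R (proposers Ec) (red_nbrs Ec)).

Lemma choices_proposers_mass : dmass C = 1.
Proof. exact/choices_mass/red_nbrs_gt0. Qed.

(* Since C_b is independent of the other proposals, the expectation of
   [choice_light Ec b] is the average of the probabilities of
   [light_without b r] over the red neighbours r of b. *)
Lemma sum_expect_choice_light b :
  \sum_(r | (b, r) \in Ec)
     (expect C (choice_light Ec b) + expect C (fun ch => (~~ light_without b r ch)%:R))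
  = \sum_(r | (b, r) \in Ec) 1.
Proof.
case: (boolP (b \in proposers Ec)) => [b_prop|]; last first.
  rewrite mem_proposers negb_exists => /forallP b_isolated.
  by rewrite !big_pred0 // => r; apply/negbTE/b_isolated.
set N := [set r | (b, r) \in Ec].
have sumN (F : cluster -> R) : \sum_(r | (b, r) \in Ec) F r = \sum_(r in N) F r.
  by apply: eq_bigl => r; rewrite inE.
have N_gt0 : (0 < #|N|)%N by rewrite cardE red_nbrs_gt0.
have expect_choice_light : expect C (choice_light Ec b) =
    (#|N|)%:R^-1 * \sum_(r in N) expect C (fun ch => (light_without b r ch)%:R).
  rewrite /choice_light expect_sum cardE big_distrr big_enum /=; apply: eq_bigr => r rN.
  have r_nbr : r \in red_nbrs Ec b by rewrite mem_red_nbrs; rewrite inE in rN.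
  by rewrite (@choices_indep _ _ _ _ _ b r (fun u => (light r u)%:R)) ?enum_uniq.
rewrite !sumN big_split /= sumr_const expect_choice_light.
rewrite -[_ *+ _]mulr_natr mulrAC mulVf ?mul1r ?pnatr_eq0 -?lt0n // -big_split.
apply: eq_bigr => r _ /=; rewrite -expectD -[RHS]choices_proposers_mass.
by apply/eq_expect/dallW => ch; case: light_without; rewrite /= ?addr0 ?add0r.
Qed.

Lemma expect_edge_survival :
  expect C (fun ch => \sum_(p in Ec)
    (1 - (choice_light Ec p.1 ch + (~~ light_without p.1 p.2 ch)%:R) / 2))
  = (#|Ec|)%:R / 2.
Proof.
have sum_pairs (F : cluster -> cluster -> R) :
    \sum_(p in Ec) F p.1 p.2 = \sum_b \sum_(r | (b, r) \in Ec) F b r.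
  by rewrite (pair_big_dep predT (fun b r => (b, r) \in Ec)); apply: eq_bigl => -[].
rewrite expect_sum (eq_bigr (fun p => 1 - (expect C (choice_light Ec p.1)
    + expect C (fun ch => (~~ light_without p.1 p.2 ch)%:R)) / 2)) => [|p _]; last first.
  transitivity (expect C (fun ch => 1 + (- 2^-1) *
    (choice_light Ec p.1 ch + (~~ light_without p.1 p.2 ch)%:R))).
    by apply/eq_expect/dallW => ch; ring.
  by rewrite expect_affine ?choices_proposers_mass // expectD; ring.
have -> : (#|Ec|)%:R = \sum_(p in Ec) 1 :> R by rewrite sumr_const.
rewrite (sum_pairs (fun b r => 1 - (expect C (choice_light Ec b)
    + expect C (fun ch => (~~ light_without b r ch)%:R)) / 2)).
rewrite (sum_pairs (fun _ _ => 1)) mulr_suml; apply: eq_bigr => b _.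
by rewrite sumrB -mulr_suml sum_expect_choice_light; field.
Qed.

End ExpectedHalving.

Lemma inner_step_supp P Ec : dall (fun st => exists ch pi,
    [/\ valid_choice Ec ch, perm_eq pi (proposers Ec)
      & st = (next_part P ch pi, next_edges Ec ch pi)])
  (inner_step e w eps TL red0 (P, Ec)).
Proof.
rewrite inner_stepE; apply: dall_bind.
apply: dall_impl (choices_supp R _ _) => ch ch_valid.
apply: dall_bind; apply: dall_uniform => pi; rewrite mem_permutations => pi_perm.
by split => //; exists ch, pi.
Qed.

Lemma inner_step_ge0 st : dweights_ge0 (inner_step e w eps TL red0 st).
Proof.
case: st => P Ec; rewrite inner_stepE.
apply: dweights_ge0_bind (choices_ge0 R _ _) _ => ch.
apply: dweights_ge0_bind (dweights_ge0_uniform R _) _ => pi.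
exact: dweights_ge0_ret.
Qed.

Lemma inner_step_mass st : dmass (inner_step e w eps TL red0 st) = 1.
Proof.
case: st => P Ec; rewrite inner_stepE; apply: dmass_bind (choices_proposers_mass _) _.
apply: dallW => ch; apply: dmass_bind (dmass_uniform_permutations R _) _.
by apply: dallW => pi; apply: dmass_ret.
Qed.

Lemma expect_card_next_edges P Ec : gc_inv Ec ->
  expect (inner_step e w eps TL red0 (P, Ec)) (fun st => (#|st.2|)%:R) <= (#|Ec|)%:R / 2.
Proof.
move=> Ec_inv; rewrite inner_stepE expect_bind -expect_edge_survival.
apply: ler_expect (choices_ge0 R _ _) _.
apply: dall_impl (choices_supp R _ _) => ch ch_valid.
rewrite expect_bind_ret.
apply: expect_le_const (dweights_ge0_uniform R _) (dmass_uniform_permutations R _) _.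
apply: dall_uniform => pi; rewrite mem_permutations => pi_perm /=.
apply: le_trans (card_next_edges_le Ec ch pi) _; apply: ler_sum => -[b r] br.
exact: edge_survival.
Qed.


Lemma inner_loop0 st : inner_loop e w eps TL red0 0 st =
  if st.2 == set0 then dret R (Some 0%N) else dret R None.
Proof. by []. Qed.

Lemma inner_loopS f st : inner_loop e w eps TL red0 f.+1 st =
  if st.2 == set0 then dret R (Some 0%N) else
  dbind (inner_step e w eps TL red0 st) (fun st' =>
  dbind (inner_loop e w eps TL red0 f st') (fun o => dret R (omap S o))).
Proof. by []. Qed.

Lemma inner_loop_set0 f P : inner_loop e w eps TL red0 f (P, set0) = dret R (Some 0%N).
Proof. by case: f => [|f]; rewrite ?inner_loop0 ?inner_loopS eqxx. Qed.

Lemma inner_loop_ge0 f st : dweights_ge0 (inner_loop e w eps TL red0 f st).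
Proof.
elim: f st => [|f IH] st.
  by rewrite inner_loop0; case: ifP => _; apply: dweights_ge0_ret.
rewrite inner_loopS; case: ifP => _; first exact: dweights_ge0_ret.
apply: dweights_ge0_bind (inner_step_ge0 _) _ => st'.
by apply: dweights_ge0_bind (IH _) _ => o; apply: dweights_ge0_ret.
Qed.

Lemma inner_loop_mass f st : dmass (inner_loop e w eps TL red0 f st) = 1.
Proof.
elim: f st => [|f IH] st.
  by rewrite inner_loop0; case: ifP => _; apply: dmass_ret.
rewrite inner_loopS; case: ifP => _; first exact: dmass_ret.
apply: dmass_bind (inner_step_mass _) _; apply: dallW => st'.
by apply: dmass_bind (IH _) _; apply: dallW => o; apply: dmass_ret.
Qed.

Definition rounds_le (T : nat) (o : option nat) : bool :=
  if o is Some m then (m <= T)%N else false.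

(* Markov's inequality, as each inner round halves the expected size of G_c. *)
Lemma inner_loop_tail T f P Ec : gc_inv Ec -> (T <= f)%N ->
  expect (inner_loop e w eps TL red0 f (P, Ec)) (fun o => (~~ rounds_le T o)%:R)
    <= (#|Ec|)%:R / 2 ^+ T.
Proof.
elim: T f P Ec => [|T IH] f P Ec Ec_inv le_T_f;
  have [->|Ec_n0] := eqVneq Ec set0;
  rewrite ?inner_loop_set0 ?expect_ret ?cards0 ?mul0r //.
  apply: (@le_trans _ _ (dmass (inner_loop e w eps TL red0 f (P, Ec)))).
    by apply: ler_expect (inner_loop_ge0 _ _) _; apply: dallW => -[[|m]|].
  by rewrite inner_loop_mass expr0 divr1 ler1n lt0n cards_eq0.
case: f le_T_f => // f le_T_f; rewrite inner_loopS (negbTE Ec_n0) expect_bind.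
apply: (@le_trans _ _ (expect (inner_step e w eps TL red0 (P, Ec))
                        (fun st => (2 ^+ T)^-1 * (#|st.2|)%:R))).
  apply: ler_expect (inner_step_ge0 _) _.
  apply: dall_impl (inner_step_supp P Ec) => _ [ch [pi [ch_valid pi_perm ->]]].
  rewrite expect_bind_ret mulrC (eq_expect (g := fun o => (~~ rounds_le T o)%:R)).
    exact/IH/le_T_f/next_edges_inv.
  by apply: dallW => -[m|].
rewrite expectZ exprS invfM [2^-1 * _]mulrC mulrCA ler_wpM2l ?invr_ge0 ?exprn_ge0 //.
exact: expect_card_next_edges.
Qed.

Lemma card_gc_blues_gt0 Ec : Ec != set0 -> (0 < #|gc_blues Ec|)%N.
Proof.
by case/set0Pn => p pEc; rewrite card_gt0; apply/set0Pn; exists p.1; apply: imset_f.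
Qed.

(* Each inner round merges at least one blue endpoint of G_c. *)
Lemma inner_loop_rounds_le f P Ec : (#|gc_blues Ec| <= f)%N ->
  dall (fun o => rounds_le #|gc_blues Ec| o) (inner_loop e w eps TL red0 f (P, Ec)).
Proof.
elim: f P Ec => [|f IH] P Ec le_blues_f;
  have [->|Ec_n0] := eqVneq Ec set0; rewrite ?inner_loop_set0 //.
  by rewrite leqNgt card_gc_blues_gt0 in le_blues_f.
rewrite inner_loopS (negbTE Ec_n0); apply: dall_bind.
apply: dall_impl (inner_step_supp P Ec) => _ [ch [pi [ch_valid pi_perm ->]]].
have lt_blues := card_gc_blues_next ch_valid pi_perm Ec_n0.
apply: dall_bind; apply: dall_impl (IH _ _ _) => [[m|] //= le_m|]; last first.
  by rewrite -ltnS (leq_trans lt_blues).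
by split=> //; apply: leq_ltn_trans le_m lt_blues.
Qed.

Lemma inner_loop_whp k P Ec : gc_inv Ec ->
  (#|gc_blues Ec| <= n)%N -> (#|Ec| <= n ^ 2)%N ->
  1 - n%:R ^- k <= expect (inner_loop e w eps TL red0 n.+1 (P, Ec))
                          (fun o => (rounds_le (k.+2 * up_log 2 n) o)%:R).
Proof.
move=> Ec_inv le_blues_n le_Ec_n2; set T := (k.+2 * up_log 2 n)%N.
rewrite (eq_expect (g := fun o => 1 + (-1) * (~~ rounds_le T o)%:R)); last first.
  by apply: dallW => o; case: rounds_le; rewrite /= ?mulr0 ?addr0 ?mulr1 ?subrr.
rewrite expect_affine ?inner_loop_mass // mulN1r lerD2l lerN2.
have [le_n_T|lt_T_n] := leqP n T.
  rewrite (eq_expect (g := fun _ => 0)) ?expect_const ?mul0r ?invr_ge0 ?exprn_ge0 //.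
  apply: dall_impl (inner_loop_rounds_le P (leq_trans le_blues_n (leqnSn n))).
  by case=> // m /= /leq_trans/(_ (leq_trans le_blues_n le_n_T)) ->.
apply: le_trans (inner_loop_tail P Ec_inv (leq_trans (ltnW lt_T_n) (leqnSn n))) _.
have n_gt0 : (0 < n)%N by apply: leq_ltn_trans lt_T_n.
have : (#|Ec| * n ^ k <= 2 ^ T)%N.
  apply: leq_trans (leq_mul le_Ec_n2 (leqnn _)) _.
  by rewrite -expnD add2n /T mulnC expnM leq_exp2r // up_logP.
rewrite -(ler_nat R) natrM !natrX => le_Ec_2T.
by rewrite ler_pdivrMr ?exprn_gt0 // mulrC ler_pdivlMr ?exprn_gt0 ?ltr0n.
Qed.
End InnerRound.

Lemma card_partition_le n (P0 : {set {set 'I_n}}) :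
  partition P0 [set: 'I_n] -> (#|P0| <= n)%N.
Proof.
move=> P0_part; rewrite -[X in (_ <= X)%N]card_ord -cardsT (card_partition P0_part).
rewrite -sum1_card leq_sum // => X X_P0; rewrite card_gt0.
by apply: contraTneq X_P0 => ->; case/and3P: P0_part.
Qed.

Section OuterRound.
Variables (R : realFieldType) (n : nat) (e : rel 'I_n) (w : 'I_n -> 'I_n -> R).
Variables (eps TL : R) (P0 : {set {set 'I_n}}).
Hypothesis eps_gt0 : 0 < eps.
Hypothesis P0_part : partition P0 [set: 'I_n].
Local Notation cluster := {set 'I_n}.

Definition initial_red (t : seq cluster) := [set X : cluster | X \in t].
Definition initial_blue (t : seq cluster) :=
  [set X in P0 | nonisolated e P0 X & X \notin t].
Definition initial_edges (t : seq cluster) :=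
  [set p : cluster * cluster | [&& p.1 \in initial_blue t, p.2 \in initial_red t,
     Hedge e p.1 p.2, TL <= Wt e w p.1 p.2 & (#|p.1| <= #|p.2|)%N]].

Lemma outer_roundE : outer_round e w eps TL P0 =
  dbind (coins R (enum [set X in P0 | nonisolated e P0 X])) (fun t =>
  inner_loop e w eps TL (initial_red t) n.+1 (P0, initial_edges t)).
Proof. by []. Qed.

Lemma inner_loop_initial_whp k t : {subset t <= P0} ->
  1 - n%:R ^- k <=
  expect (inner_loop e w eps TL (initial_red t) n.+1 (P0, initial_edges t))
         (fun o => (rounds_le (k.+2 * up_log 2 n) o)%:R).
Proof.
move=> t_P0; set red0 := initial_red t; set blue0 := initial_blue t.
have red_P0 : red0 \subset P0 by apply/subsetP => X; rewrite inE => /t_P0.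
have blue_P0 : blue0 \subset P0 by apply/subsetP => X; rewrite inE => /andP [].
have trivI : trivIset (red0 :|: blue0).
  by apply: trivIsetS (partition_trivIset P0_part); rewrite subUset red_P0.
have disj : [disjoint red0 & blue0].
  rewrite -setI_eq0; apply/eqP/setP => X.
  by rewrite !inE; case: (X \in t); rewrite ?andbF.
have edge_ends p : p \in initial_edges t -> p.1 \in blue0 /\ p.2 \in red0.
  by rewrite inE => /and5P [-> -> _ _ _].
apply: (inner_loop_whp _ _ _ eps_gt0 trivI disj).
- split=> [p /edge_ends [] //|p q /edge_ends [p_blue _] /edge_ends [_ q_red]].
  by rewrite disjoint_sym; exact: (red_blue_disjoint_mem trivI disj q_red p_blue).
- apply: leq_trans (card_partition_le P0_part); apply/subset_leq_card/subsetP => X.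
  by case/imsetP => p /edge_ends [p_blue _] ->; apply: (subsetP blue_P0).
apply: leq_trans (_ : #|setX P0 P0| <= _)%N; last first.
  by rewrite cardsX mulnn leq_sqr card_partition_le.
apply/subset_leq_card/subsetP => -[X Y] /edge_ends [X_blue Y_red].
by rewrite in_setX (subsetP blue_P0 _ X_blue) (subsetP red_P0 _ Y_red).
Qed.

End OuterRound.

Theorem mainTheorem6 (R : realFieldType) (eps : R) :
  0 < eps ->
  forall k : nat, exists C : nat,
  forall (n : nat) (e : rel 'I_n) (w : 'I_n -> 'I_n -> R) (TL : R)
         (P0 : {set {set 'I_n}}),
    symmetric e -> irreflexive e ->
    (forall x y, e x y -> 0 < w x y) ->
    (forall x y, e x y -> w x y = w y x) ->
    partition P0 [set: 'I_n] ->
    (exists X Y, [/\ X \in P0, Y \in P0, X != Y, Hedge e X Y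
                   & TL <= Wt e w X Y]) ->
    1 - (n%:R ^- k) <=
      dprob (outer_round e w eps TL P0)
        (fun o => if o is Some m then (m <= C * up_log 2 n)%N else false).
Proof.
move=> eps_gt0 k; exists k.+2 => n e w TL P0 _ _ _ _ P0_part _.
rewrite dprobE outer_roundE expect_bind.
apply: const_le_expect (coins_ge0 _ _) (coins_mass _ _) _.
apply: dall_impl (coins_sub _ _) => t t_S.
apply: (inner_loop_initial_whp _ _ _ eps_gt0 P0_part) => X /t_S.
by rewrite mem_enum inE => /andP [].
Qed.
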